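(* Let $(\Delta,\mathcal{D},\mathbb{P})$ be a probability space, $\mathcal{Z}$ a set, and $M_m:\Delta^m\to\mathcal{Z}$, $m=0,1,2,\ldots$, a family of maps ($M_0$ being the decision returned for the empty list). For each $\delta\in\Delta$ let $\mathcal{Z}'_\delta\subseteq\mathcal{Z}$ and $\mathcal{Z}''_\delta\subseteq\mathcal{Z}$ be given sets. Assume that the maps $M_m$ are consistent with respect to $\{\mathcal{Z}'_\delta\}$, i.e., for all integers $m\ge 0$, $n>0$ and all $\delta_1,\ldots,\delta_{m+n}\in\Delta$: (i) (permutation invariance) $M_m(\delta_1,\ldots,\delta_m)=M_m(\delta_{i_1},\ldots,\delta_{i_m})$ for every permutation $(i_1,\ldots,i_m)$ of $(1,\ldots,m)$; (ii) (confirmation under appropriateness) if $M_m(\delta_1,\ldots,\delta_m)\in\mathcal{Z}'_{\delta_{m+i}}$ for all $i\in\{1,\ldots,n\}$, then $M_{m+n}(\delta_1,\ldots,\delta_{m+n})=M_m(\delta_1,\ldots,\delta_m)$; (iii) (responsiveness to inappropriateness) if $M_m(\delta_1,\ldots,\delta_m)\notin\mathcal{Z}'_{\delta_{m+i}}$ for some $i\in\{1,\ldots,n\}$, then $M_{m+n}(\delta_1,\ldots,\delta_{m+n})\neq M_m(\delta_1,\ldots,\delta_m)$. Define the instrumental maps $M^+_m:\Delta^m\to\mathcal{Z}\times\mathbb{N}$ by $M^+_m(\delta_1,\ldots,\delta_m)=(z^*_m,c^*_m)$, where $z^*_m=M_m(\delta_1,\ldots,\delta_m)$ and $c^*_m=\#\{i\in\{1,\ldots,m\}: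 z^*_m\notin\mathcal{Z}''_{\delta_i}\}$, and for each $\delta$ set $\mathcal{Z}^+_\delta:=(\mathcal{Z}'_\delta\times\mathbb{N})\cap(\mathcal{Z}''_\delta\times\mathbb{N})$. Then the maps $M^+_m$ satisfy conditions (i), (ii), (iii) above with $M_m$ replaced by $M^+_m$ (and $M_{m+n}$ by $M^+_{m+n}$) and $\mathcal{Z}'_{\delta_{m+i}}$ replaced by $\mathcal{Z}^+_{\delta_{m+i}}$.
   Context: $\mathbb{N}$ denotes the set of non-negative integers and $\#$ denotes cardinality. $\mathcal{Z}'_\delta$ is interpreted as the set of decisions that are ''baseline appropriate'' for scenario $\delta$, and $\mathcal{Z}''_\delta$ as the set of decisions that are ''post-design appropriate'' for $\delta$; no consistency assumption is made with respect to $\mathcal{Z}''_\delta$. *)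

From HB Require Import structures.
From mathcomp Require Import all_boot all_order all_algebra all_fingroup.
From mathcomp Require Import all_classical all_reals all_analysis.
Set Implicit Arguments. Unset Strict Implicit. Unset Printing Implicit Defensive.
Local Open Scope classical_set_scope.

Definition consistent (Delta T : Type) (M : forall m : nat, ('I_m -> Delta) -> T)
  (Zp : Delta -> set T) : Prop :=
  (forall (m : nat) (d : 'I_m -> Delta) (s : 'S_m),
      M m (fun i => d (s i)) = M m d) /\
  (forall (m n : nat) (d : 'I_(m + n) -> Delta), (0 < n)%N ->
      (forall i : 'I_n, Zp (d (rshift m i)) (M m (fun j => d (lshift n j)))) ->
      M (m + n)%N d = M m (fun j => d (lshift n j))) /\
  (forall (m n : nat) (d : 'I_(m + n) -> Delta), (0 < n)%N ->
      (exists i : 'I_n, ~ Zp (d (rshift m i)) (M m (fun j => d (lshift n j)))) ->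
      M (m + n)%N d <> M m (fun j => d (lshift n j))).

Definition Mplus (Delta Z : Type) (M : forall m : nat, ('I_m -> Delta) -> Z)
  (Z2 : Delta -> set Z) : forall m : nat, ('I_m -> Delta) -> Z * nat :=
  fun m d => (M m d, #|[set i : 'I_m | ~~ `[< Z2 (d i) (M m d) >] ]|%N).

Definition Zplus (Delta Z : Type) (Z1 Z2 : Delta -> set Z) (delta : Delta)
  : set (Z * nat) :=
  (Z1 delta `*` [set: nat]) `&` (Z2 delta `*` [set: nat]).

From HB Require Import structures.
From mathcomp Require Import all_boot all_order all_algebra all_fingroup.
From mathcomp Require Import all_classical all_reals all_analysis.

(* The first component of M^+ inherits
   (i)-(iii) from M, so the count only matters when M_{m+n} = M_m. Then the
   new scenarios add nothing to the count if they are all post-design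
   appropriate, and make it grow strictly otherwise, so that M^+ changes even
   though M does not. *)

Lemma card_predE {T : finType} (p : pred T) : #|[pred i | p i]| = (\sum_i p i)%N.
Proof.
by rewrite -sum1_card big_mkcond; apply: eq_bigr => i _; rewrite unfold_in; case: (p i).
Qed.

Lemma card_pred_perm {T : finType} (s : {perm T}) (p : pred T) :
  #|[pred i | p (s i)]| = #|[pred i | p i]|.
Proof. by rewrite !card_predE [RHS](reindex_inj (@perm_inj _ s)). Qed.

Lemma card_pred_split_ord {m n : nat} (p : pred 'I_(m + n)) :
  #|[pred i | p i]| = (#|[pred j | p (lshift n j)]| + #|[pred k | p (rshift m k)]|)%N.
Proof. by rewrite !card_predE big_split_ord. Qed.

Local Open Scope classical_set_scope.

Section Instrumental.

Context {Delta Z : Type} {M : forall m : nat, ('I_m -> Delta) -> Z}.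
Context {Z1 Z2 : Delta -> set Z}.
Hypothesis M_consistent : consistent M Z1.

Definition violations (z : Z) {m : nat} (d : 'I_m -> Delta) : nat :=
  #|[pred i | ~~ `[< Z2 (d i) z >]]|.

Lemma MplusE (m : nat) (d : 'I_m -> Delta) :
  Mplus M Z2 d = (M m d, violations (M m d) d).
Proof.
rewrite /Mplus /violations; congr (_, _); apply: eq_card => i.
by apply/idP/idP; rewrite in_setE.
Qed.

Lemma ZplusE (delta : Delta) (z : Z) (c : nat) :
  Zplus Z1 Z2 delta (z, c) <-> Z1 delta z /\ Z2 delta z.
Proof. by rewrite /Zplus; split=> [[[? _] [? _]]|[? ?]]. Qed.

Lemma violations_cat (z : Z) (m n : nat) (d : 'I_(m + n) -> Delta) :
  violations z d = (violations z (fun j => d (lshift n j))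
                    + violations z (fun k => d (rshift m k)))%N.
Proof. exact: card_pred_split_ord. Qed.

Lemma violations_eq0 {z : Z} {m : nat} {d : 'I_m -> Delta} :
  (forall i, Z2 (d i) z) -> violations z d = 0%N.
Proof.
by move=> Z2d; apply: eq_card0 => i; rewrite !inE /=; apply/negbF/asboolP.
Qed.

Lemma violations_gt0 {z : Z} {m : nat} {d : 'I_m -> Delta} (i : 'I_m) :
  ~ Z2 (d i) z -> (0 < violations z d)%N.
Proof.
by move=> notZ2; apply/card_gt0P; exists i; rewrite !inE /=; apply/asboolPn.
Qed.

Lemma Mplus_perm (m : nat) (d : 'I_m -> Delta) (s : 'S_m) :
  Mplus M Z2 (fun i => d (s i)) = Mplus M Z2 d.
Proof.
have [M_perm _] := M_consistent.
rewrite !MplusE M_perm; congr (_, _).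
exact: (card_pred_perm s (fun i => ~~ `[< Z2 (d i) (M m d) >])).
Qed.

Lemma Mplus_confirm (m n : nat) (d : 'I_(m + n) -> Delta) : (0 < n)%N ->
  (forall i : 'I_n, Zplus Z1 Z2 (d (rshift m i)) (Mplus M Z2 (fun j => d (lshift n j)))) ->
  Mplus M Z2 d = Mplus M Z2 (fun j => d (lshift n j)).
Proof.
have [_ [M_confirm _]] := M_consistent.
move=> n_gt0 appropriate.
have Z1d i : Z1 (d (rshift m i)) (M m (fun j => d (lshift n j))).
  by case/ZplusE: (appropriate i).
have Z2d i : Z2 (d (rshift m i)) (M m (fun j => d (lshift n j))).
  by case/ZplusE: (appropriate i).
by rewrite !MplusE (M_confirm m n d n_gt0 Z1d) violations_cat (violations_eq0 Z2d) addn0.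
Qed.

Lemma Mplus_respond (m n : nat) (d : 'I_(m + n) -> Delta) : (0 < n)%N ->
  (exists i : 'I_n, ~ Zplus Z1 Z2 (d (rshift m i)) (Mplus M Z2 (fun j => d (lshift n j)))) ->
  Mplus M Z2 d <> Mplus M Z2 (fun j => d (lshift n j)).
Proof.
have [_ [M_confirm M_respond]] := M_consistent.
move=> n_gt0 [i inappropriate]; rewrite !MplusE.
have [[k notZ1] | allZ1] :=
  pselect (exists k : 'I_n, ~ Z1 (d (rshift m k)) (M m (fun j => d (lshift n j)))).
  by case=> M_eq _; apply: (M_respond m n d n_gt0) M_eq; exists k.
have Z1d k : Z1 (d (rshift m k)) (M m (fun j => d (lshift n j))).
  by apply: contrapT => notZ1; apply: allZ1; exists k.
have notZ2 : ~ Z2 (d (rshift m i)) (M m (fun j => d (lshift n j))).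
  by move=> Z2d; apply: inappropriate; apply/ZplusE.
have new_violation := violations_gt0 (d := fun k => d (rshift m k)) i notZ2.
rewrite (M_confirm m n d n_gt0 Z1d) violations_cat => -[] /eqP.
by rewrite -[X in _ == X]addn0 eqn_add2l eqn0Ngt new_violation.
Qed.

End Instrumental.

Theorem lemma1 (R : realType) (dd : measure_display) (Delta : measurableType dd)
  (P : probability Delta R) (Z : Type)
  (M : forall m : nat, ('I_m -> Delta) -> Z) (Z1 Z2 : Delta -> set Z) :
  consistent M Z1 -> consistent (Mplus M Z2) (Zplus Z1 Z2).
Proof.
move=> M_consistent; split; [|split].
- exact: (Mplus_perm M_consistent).
- exact: (Mplus_confirm M_consistent).
- exact: (Mplus_respond M_consistent).
Qed.
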